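(* Let $L=2U\oplus L_0$ be an even lattice of signature $(2,n)$, $n\ge3$, such that every isotropic subgroup of the discriminant group $(A_L,q_L)$ is cyclic. Then the closure in the Baily–Borel compactification $\mathcal F_L^*$ of every $1$-dimensional cusp contains the standard $0$-dimensional cusp.
   Context: $U$ is the hyperbolic plane; $A_L=L^\vee/L$ with discriminant quadratic form $q_L\colon A_L\to\mathbb Q/2\mathbb Z$; a subgroup $H\subset A_L$ is isotropic if $q_L|_H=0$. $\mathcal D_L$ is one of the two components of $\{[w]\in\mathbb P(L\otimes\mathbb C)\mid (w,w)=0,(w,\bar w)>0\}$, $\widetilde{\mathrm O}^+(L)$ is the subgroup of $\mathrm O(L)$ preserving $\mathcal D_L$ and acting trivially on $A_L$, and $\mathcal F_L=\widetilde{\mathrm O}^+(L)\backslash\mathcal D_L$. The $0$-dimensional cusps of $\mathcal F_L^*$ correspond to $\widetilde{\mathrm O}^+(L)$-orbits of primitive isotropic vectors of $L$, and the $1$-dimensional cusps to orbits of primitive totally isotropic rank-$2$ sublattices $E\subset L$; the closure of the $1$-dimensional cusp of $E$ contains the $0$-dimensional cusps of the primitive isotropic vectors lying in $E$. All primitive isotropic vectors $v$ with $\mathrm{div}(v)=1$ (where $\mathrm{div}(v)\mathbb Z=(v,L)$) form a single orbit; the corresponding cusp is called the standard $0$-dimensional cusp. *)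

From HB Require Import structures.
From mathcomp Require Import all_boot all_order all_algebra.
Set Implicit Arguments. Unset Strict Implicit. Unset Printing Implicit Defensive.
Import Order.TTheory GRing.Theory Num.Theory.
Local Open Scope ring_scope.

(* A lattice of rank m is modelled as Z^m inside Q^m (row vectors),
   with the bilinear form given by an integral Gram matrix G. *)

Definition isInt (q : rat) : Prop := exists z : int, q = z%:~R.

Definition bform (m : nat) (G : 'M[int]_m) (x y : 'rV[rat]_m) : rat :=
  (x *m map_mx (fun z : int => z%:~R) G *m y^T) 0 0.

Definition lattice_vec (m : nat) (x : 'rV[rat]_m) : Prop :=
  forall i, isInt (x 0 i).

Definition dual_vec (m : nat) (G : 'M[int]_m) (x : 'rV[rat]_m) : Prop :=
  forall y, lattice_vec y -> isInt (bform G x y).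

Definition primitive_vec (m : nat) (v : 'rV[rat]_m) : Prop :=
  [/\ lattice_vec v, v != 0 &
      forall d : nat, (1 < d)%N -> ~ lattice_vec (d%:R^-1 *: v)].

Definition isotropic_vec (m : nat) (G : 'M[int]_m) (v : 'rV[rat]_m) : Prop :=
  bform G v v = 0.

Definition div_is (m : nat) (G : 'M[int]_m) (v : 'rV[rat]_m) (d : int) : Prop :=
  forall z : int,
    (exists w, lattice_vec w /\ bform G v w = z%:~R) <-> (d %| z)%Z.

(* Subgroups H of A_L = L^v / L correspond to additive subgroups S with
   L <= S <= L^v;  H is isotropic iff q_L = 0 on H, i.e. (x,x) in 2Z for x in S;
   H is cyclic iff S = Z y + L for some y. *)
Definition AL_subgroup (m : nat) (G : 'M[int]_m) (S : 'rV[rat]_m -> Prop) : Prop :=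
  [/\ forall x, S x -> dual_vec G x,
      forall x, lattice_vec x -> S x,
      forall x y, S x -> S y -> S (x + y) &
      forall x, S x -> S (- x)].

Definition AL_isotropic (m : nat) (G : 'M[int]_m) (S : 'rV[rat]_m -> Prop) : Prop :=
  forall x, S x -> exists z : int, bform G x x = (2 * z)%:~R.

Definition AL_cyclic (m : nat) (S : 'rV[rat]_m -> Prop) : Prop :=
  exists y, S y /\
    forall x, S x <-> exists (k : int) (l : 'rV[rat]_m),
                        lattice_vec l /\ x = k%:~R *: y + l.

Definition isotropic_subgroups_cyclic (m : nat) (G : 'M[int]_m) : Prop :=
  forall S, AL_subgroup G S -> AL_isotropic G S -> AL_cyclic S.

(* Gram matrix of 2U = U + U, U the hyperbolic plane [[0,1],[1,0]] *)
Definition gram2U : 'M[int]_4 :=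
  \matrix_(i, j) (if ((i + j == 1)%N || (i + j == 5)%N) then 1 else 0).

Definition gram2U_plus (k : nat) (G0 : 'M[int]_k) : 'M[int]_(4 + k) :=
  block_mx gram2U 0 0 G0.

Definition even_gram (k : nat) (G0 : 'M[int]_k) : Prop :=
  G0^T = G0 /\ forall i, (2 %| G0 i i)%Z.

Definition neg_definite (k : nat) (G0 : 'M[int]_k) : Prop :=
  forall x : 'rV[rat]_k, x != 0 -> bform G0 x x < 0.

Definition prim_tot_isotropic_rank2 (m : nat) (G : 'M[int]_m) (e1 e2 : 'rV[rat]_m) : Prop :=
  [/\ lattice_vec e1, lattice_vec e2,
      (forall p q : rat, p *: e1 + q *: e2 = 0 -> p = 0 /\ q = 0),
      [/\ bform G e1 e1 = 0, bform G e1 e2 = 0 & bform G e2 e2 = 0] &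
      (forall (x : 'rV[rat]_m) (p q : rat), lattice_vec x -> x = p *: e1 + q *: e2 ->
          isInt p /\ isInt q)].

(* The closure of the 1-dim cusp of E contains the 0-dim cusp of every primitive
   isotropic v in E; that 0-dim cusp is the standard one iff v lies in the
   orbit of div-1 primitive isotropic vectors, i.e. iff div(v) = 1. *)
Definition closure_contains_standard_cusp (m : nat) (G : 'M[int]_m) (e1 e2 : 'rV[rat]_m) : Prop :=
  exists a b : int, let v := a%:~R *: e1 + b%:~R *: e2 in
    [/\ primitive_vec v, isotropic_vec G v & div_is G v 1].

From HB Require Import structures.
From mathcomp Require Import all_boot all_order all_algebra.
From mathcomp Require Import ring lra.
Import Order.TTheory GRing.Theory Num.Theory.
Local Open Scope ring_scope.
Set Implicit Arguments. Unset Strict Implicit. Unset Printing Implicit Defensive.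

(* Let E = Z e1 + Z e2.  The vectors p e1 + q e2 of L^v, together with L, span a
   subgroup of L^v whose image in A_L is isotropic, because E is totally isotropic
   and L is even; by hypothesis that image is cyclic.  Since E is primitive, the
   pairs (p, q) with p e1 + q e2 in L^v are then, modulo Z^2, the multiples of a
   single rational pair, so a primitive integral pair (al, be) proportional to it
   makes p be - q al an integer for all of them.  Completing (al, be) to a
   unimodular matrix gives (a, b) with a be - b al = 1, and v = a e1 + b e2 has
   v / h outside L^v for every integer h <> 1, -1: this says at once that v is
   primitive and that div(v) = 1. *)

Lemma isIntP (x : rat) : reflect (isInt x) (x \is a Num.int).
Proof. exact: intrP. Qed.

Lemma isInt_int (z : int) : isInt z%:~R. Proof. by exists z. Qed.

Lemma isIntD x y : isInt x -> isInt y -> isInt (x + y).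
Proof. by move=> /isIntP hx /isIntP hy; apply/isIntP; rewrite rpredD. Qed.

Lemma isIntN x : isInt x -> isInt (- x).
Proof. by move=> /isIntP hx; apply/isIntP; rewrite rpredN. Qed.

Lemma isIntB x y : isInt x -> isInt y -> isInt (x - y).
Proof. by move=> hx /isIntN; apply: isIntD. Qed.

Lemma isIntM x y : isInt x -> isInt y -> isInt (x * y).
Proof. by move=> /isIntP hx /isIntP hy; apply/isIntP; rewrite rpredM. Qed.

Lemma isInt_sum (I : finType) (F : I -> rat) :
  (forall i, isInt (F i)) -> isInt (\sum_i F i).
Proof. by move=> hF; apply/isIntP/rpred_sum => i _; apply/isIntP. Qed.

Lemma even_of_isInt_half (x : rat) : isInt (x / 2) -> exists z : int, x = (2 * z)%:~R.
Proof. by case=> z hz; exists z; rewrite intrM -hz mulrC mulfK. Qed.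

Lemma isInt_invr (h : int) : h != 0 -> isInt h%:~R^-1 -> `|h|%N = 1%N.
Proof.
move=> h0 [z hz]; apply/eqP; rewrite -dvdz1; apply/dvdzP; exists z.
by apply: (@intr_inj rat); rewrite intrM -hz mulrC mulfV ?intr_eq0.
Qed.

Lemma row_bezout m (C : 'rV[int]_m) :
  exists X : 'rV[int]_m, forall i, ((\sum_k C ord0 k * X ord0 k) %| C ord0 i)%Z.
Proof.
suff /(_ m (leqnn m)) [X HX] : forall j, (j <= m)%N -> exists X : 'rV[int]_m,
    forall i : 'I_m, (i < j)%N -> ((\sum_k C ord0 k * X ord0 k) %| C ord0 i)%Z.
  by exists X => i; apply: HX.
elim=> [|j IHj] hj; first by exists 0 => i; rewrite ltn0.
have [X HX] := IHj (ltnW hj); pose jj := Ordinal hj.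
set g := \sum_k C ord0 k * X ord0 k in HX.
have [u [w Huw]] := Bezoutz g (C ord0 jj).
exists (u *: X + w *: delta_mx 0 jj).
have -> : \sum_k C ord0 k * (u *: X + w *: delta_mx 0 jj) ord0 k = gcdz g (C ord0 jj).
  rewrite -Huw /g mulr_sumr.
  under eq_bigr do rewrite !mxE mulrDr mulrCA [C _ _ * (w * _)]mulrCA.
  rewrite big_split /=; congr (_ + _); rewrite (bigD1 jj) //= big1 => [|k /negbTE hk].
    by rewrite eqxx mulr1 addr0 mulrC.
  by rewrite hk mulr0 mulr0.
move=> i; rewrite ltnS leq_eqVlt => /predU1P [ij | lt]; last first.
  exact: dvdz_trans (dvdz_gcdl _ _) (HX i lt).
by rewrite (_ : i = jj) ?dvdz_gcdr //; apply: val_inj.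
Qed.

Local Notation qmx A := (map_mx (fun z : int => z%:~R) A).

Section Lattice.
Variable m : nat.
Implicit Types (G : 'M[int]_m) (v w x y z : 'rV[rat]_m).

Lemma lattice_vec0 : lattice_vec (0 : 'rV[rat]_m).
Proof. by move=> i; rewrite mxE; exists 0. Qed.

Lemma lattice_vecD x y : lattice_vec x -> lattice_vec y -> lattice_vec (x + y).
Proof. by move=> hx hy i; rewrite mxE; apply: isIntD. Qed.

Lemma lattice_vecN x : lattice_vec x -> lattice_vec (- x).
Proof. by move=> hx i; rewrite mxE; apply: isIntN. Qed.

Lemma lattice_vecZ (k : int) x : lattice_vec x -> lattice_vec (k%:~R *: x).
Proof. by move=> hx i; rewrite mxE; apply/isIntM/hx/isInt_int. Qed.

Lemma lattice_vec_map (X : 'rV[int]_m) : lattice_vec (qmx X).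
Proof. by move=> i; rewrite mxE; apply: isInt_int. Qed.

Lemma lattice_vec_introw x : lattice_vec x -> exists X : 'rV[int]_m, x = qmx X.
Proof.
move=> hx; exists (\row_i numq (x 0 i)); apply/rowP => i.
by rewrite !mxE; case: (hx i) => z ->; rewrite numq_int.
Qed.

Lemma bform_sum G x y : bform G x y = \sum_k (x *m qmx G) 0 k * y 0 k.
Proof. by rewrite /bform mxE; apply: eq_bigr => k _; rewrite [y^T _ _]mxE. Qed.

Lemma bformDl G x y z : bform G (x + y) z = bform G x z + bform G y z.
Proof. by rewrite /bform !mulmxDl mxE. Qed.

Lemma bformNl G x y : bform G (- x) y = - bform G x y.
Proof. by rewrite /bform !mulNmx mxE. Qed.

Lemma bformZl G a x y : bform G (a *: x) y = a * bform G x y.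
Proof. by rewrite /bform -!scalemxAl mxE. Qed.

Lemma bformDr G x y z : bform G x (y + z) = bform G x y + bform G x z.
Proof. by rewrite /bform linearD /= mulmxDr mxE. Qed.

Lemma bformZr G a x y : bform G x (a *: y) = a * bform G x y.
Proof. by rewrite /bform linearZ /= -scalemxAr mxE. Qed.

Lemma bform_sym G x y : G^T = G -> bform G x y = bform G y x.
Proof.
move=> hG; rewrite /bform.
transitivity ((x *m qmx G *m y^T)^T 0 0); first by rewrite [RHS]mxE.
by rewrite !trmx_mul trmxK map_trmx hG mulmxA.
Qed.

Lemma lattice_vec_mul G x : lattice_vec x -> lattice_vec (x *m qmx G).
Proof.
by move=> hx k; rewrite mxE; apply: isInt_sum => j; rewrite mxE; apply/isIntM/isInt_int.
Qed.

Lemma bform_int G x y : lattice_vec x -> lattice_vec y -> isInt (bform G x y).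
Proof.
move=> hx hy; rewrite bform_sum; apply: isInt_sum => k.
exact/isIntM/hy/lattice_vec_mul.
Qed.

Lemma bform_delta G i j : bform G (delta_mx 0 i) (delta_mx 0 j) = (G i j)%:~R.
Proof. by rewrite /bform trmx_delta -rowE -colE !mxE. Qed.

Lemma bform_normD G x y : G^T = G ->
  bform G (x + y) (x + y) = bform G x x + bform G y y + 2 * bform G x y.
Proof. by move=> hG; rewrite !bformDl !bformDr (@bform_sym G y x hG); ring. Qed.

Lemma bform_norm_even G x : even_gram G -> lattice_vec x ->
  isInt (bform G x x / 2).
Proof.
move=> [hG hdiag] hx; rewrite (row_sum_delta x).
pose P u := lattice_vec u /\ isInt (bform G u u / 2).
suff [] : P (\sum_j x 0 j *: delta_mx 0 j) by [].
apply: big_ind.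
- split; first exact: lattice_vec0.
  by rewrite /bform !mul0mx mxE mul0r; exists 0.
- move=> u w [hu Hu] [hw Hw]; split; first exact: lattice_vecD.
  rewrite bform_normD // 2!mulrDl mulrAC mulfV // mul1r.
  by apply/isIntD/bform_int => //; apply: isIntD.
- move=> j _; have [a ->] := hx j; split.
    by apply/lattice_vecZ => k; rewrite mxE; apply/isIntP/rpred_nat.
  rewrite bformZl bformZr bform_delta; have /dvdzP [c ->] := hdiag j.
  rewrite intrM -[2%:~R]/(2 : rat) !mulrA mulfK //.
  by apply/isIntM/isInt_int; apply/isIntM; apply: isInt_int.
Qed.

Lemma dual_vec_lattice G x : lattice_vec x -> dual_vec G x.
Proof. by move=> hx y; apply: bform_int. Qed.

Lemma dual_vecD G x y : dual_vec G x -> dual_vec G y -> dual_vec G (x + y).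
Proof. by move=> hx hy z hz; rewrite bformDl; apply: isIntD; [apply: hx | apply: hy]. Qed.

Lemma dual_vecN G x : dual_vec G x -> dual_vec G (- x).
Proof. by move=> hx z hz; rewrite bformNl; apply/isIntN/hx. Qed.

Lemma bform_values_principal G v : lattice_vec v ->
  exists g : int, (exists2 w, lattice_vec w & bform G v w = g%:~R) /\
    forall x, lattice_vec x -> exists z : int, bform G v x = (g * z)%:~R.
Proof.
move=> hv; have [C eC] := lattice_vec_introw (lattice_vec_mul G hv).
have bformC X : bform G v (qmx X) = (\sum_k C ord0 k * X ord0 k)%:~R.
  rewrite bform_sum eC rmorph_sum; apply: eq_bigr => k _.
  by rewrite rmorphM !mxE.
have [X HX] := row_bezout C.
exists (\sum_k C ord0 k * X ord0 k); split.
  by exists (qmx X); [apply: lattice_vec_map | rewrite bformC].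
move=> x /lattice_vec_introw [Y ->]; rewrite bformC.
have /dvdzP [z ->] : ((\sum_k C ord0 k * X ord0 k) %| \sum_k C ord0 k * Y ord0 k)%Z.
  by apply: rpred_sum => k _; apply: dvdz_mulr.
by exists z; rewrite mulrC.
Qed.

Definition dual_primitive G v :=
  forall h : int, h != 0 -> dual_vec G (h%:~R^-1 *: v) -> `|h|%N = 1%N.

Lemma dual_primitive_neq0 G v : dual_primitive G v -> v != 0.
Proof.
move=> hv; apply/eqP => v0; move: (hv 2 isT); rewrite v0 scaler0.
by move/(_ (dual_vec_lattice G lattice_vec0)).
Qed.

Lemma primitive_of_dual_primitive G v :
  lattice_vec v -> dual_primitive G v -> primitive_vec v.
Proof.
move=> hv hdv; split=> // [|d d_gt1 hvd]; first exact: dual_primitive_neq0 hdv.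
have d0 : d%:Z != 0 by rewrite eqz_nat -lt0n (ltn_trans _ d_gt1).
by move: d_gt1; rewrite -[d]/`|d%:Z|%N (hdv _ d0 (dual_vec_lattice G hvd)).
Qed.

Lemma div_is1_of_dual_primitive G v :
  lattice_vec v -> dual_primitive G v -> div_is G v 1.
Proof.
move=> hv hdv; have [g [[w hw vw] hg]] := bform_values_principal G hv.
have g1 : `|g|%N = 1%N.
  have [g0 | gn0] := eqVneq g 0.
    suff /(hdv 2 isT) : dual_vec G (2%:~R^-1 *: v) by [].
    by move=> x /hg [z hz]; rewrite bformZl hz g0 mul0r mulr0; exists 0.
  apply: (hdv g gn0) => x /hg [z hz]; rewrite bformZl hz intrM mulKf ?intr_eq0 //.
  exact: isInt_int.
have gg : g * g = 1 by case: g g1 {hg vw} => [[|[|]]|[|]].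
move=> z; split=> _; first exact: dvd1z.
exists ((z * g)%:~R *: w); split; first exact: lattice_vecZ.
by rewrite bformZr vw -intrM -mulrA gg mulr1.
Qed.

End Lattice.

Lemma even_gram_2U_plus k (G0 : 'M[int]_k) :
  even_gram G0 -> even_gram (gram2U_plus G0).
Proof.
move=> [hsym hdiag]; split.
  rewrite /gram2U_plus tr_block_mx hsym !trmx0; congr block_mx.
  by apply/matrixP => i j; rewrite !mxE addnC.
move=> i; rewrite /gram2U_plus; case: (split_ordP i) => i' ->.
  by rewrite block_mxEul mxE; case: i' => [[|[|[|[|//]]]] ?].
by rewrite block_mxEdr.
Qed.

Lemma unimodular_pair_int (A B : int) :
  exists al be a b : int, a * be - b * al = 1 /\ A * be = B * al.
Proof.
have [u [w Huw]] := Bezoutz A B.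
have [/eqP|gn0] := eqVneq (gcdz A B) 0.
  by rewrite gcdz_eq0 => /andP [/eqP -> /eqP ->]; exists 0, 1, 1, 0.
have eA := divzK (dvdz_gcdl A B); have eB := divzK (dvdz_gcdr A B).
set g := gcdz A B in gn0 Huw eA eB.
exists (A %/ g)%Z, (B %/ g)%Z, w, (- u); split; apply: (mulIf gn0).
  transitivity (u * ((A %/ g)%Z * g) + w * ((B %/ g)%Z * g)); first by ring.
  by rewrite eA eB Huw mul1r.
by rewrite -!mulrA eA eB mulrC.
Qed.

Lemma unimodular_pair (p0 q0 : rat) :
  exists al be a b : int, a * be - b * al = 1 /\ p0 * be%:~R = q0 * al%:~R.
Proof.
have [al [be [a [b [hab hAB]]]]] :=
  unimodular_pair_int (numq p0 * denq q0) (numq q0 * denq p0).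
exists al, be, a, b; split=> //.
have c0 : (denq p0 * denq q0)%:~R != 0 :> rat.
  by rewrite intr_eq0 mulf_neq0 ?denq_neq0.
apply: (mulfI c0); move/(congr1 (fun z : int => z%:~R : rat)): hAB.
rewrite !intrM !numqE => hAB.
transitivity (p0 * (denq p0)%:~R * (denq q0)%:~R * be%:~R); first by ring.
by rewrite hAB; ring.
Qed.

Section IsotropicPlane.
Variables (m : nat) (G : 'M[int]_m) (e1 e2 : 'rV[rat]_m).
Hypotheses (hG : even_gram G) (hE : prim_tot_isotropic_rank2 G e1 e2).

(* The preimage in L^v of the subgroup ((E (x) Q) cap L^v + L) / L of A_L. *)
Definition plane_dual_subgroup (y : 'rV[rat]_m) : Prop :=
  exists p q l, [/\ dual_vec G (p *: e1 + q *: e2), lattice_vec l &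
                    y = p *: e1 + q *: e2 + l].

Lemma plane_isotropic p q : bform G (p *: e1 + q *: e2) (p *: e1 + q *: e2) = 0.
Proof.
have [hsym _] := hG; have [_ _ _ [h11 h12 h22] _] := hE.
by rewrite bform_normD // !bformZl !bformZr h11 h12 h22 !mulr0 !addr0.
Qed.

Lemma AL_subgroup_plane_dual : AL_subgroup G plane_dual_subgroup.
Proof.
split.
- by move=> _ [p [q [l [hw hl ->]]]]; apply/dual_vecD/dual_vec_lattice.
- move=> x hx; exists 0, 0, x; rewrite !scale0r !add0r; split=> //.
  exact/dual_vec_lattice/lattice_vec0.
- move=> _ _ [p [q [l [hw hl ->]]]] [p' [q' [l' [hw' hl' ->]]]].
  exists (p + p'), (q + q'), (l + l'); rewrite !scalerDl addrACA [RHS]addrACA.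
  by split=> //; [apply: dual_vecD | apply: lattice_vecD].
- move=> _ [p [q [l [hw hl ->]]]]; exists (- p), (- q), (- l).
  rewrite !scaleNr -!opprD; split=> //; [exact: dual_vecN | exact: lattice_vecN].
Qed.

Lemma AL_isotropic_plane_dual : AL_isotropic G plane_dual_subgroup.
Proof.
move=> _ [p [q [l [hw hl ->]]]]; apply: even_of_isInt_half.
have [hsym _] := hG.
rewrite bform_normD // plane_isotropic add0r mulrDl mulrAC mulfV // mul1r.
exact: isIntD (bform_norm_even hG hl) (hw l hl).
Qed.

Hypothesis hcyc : isotropic_subgroups_cyclic G.

Lemma plane_dual_coef_cyclic : exists p0 q0 : rat, forall p q,
  dual_vec G (p *: e1 + q *: e2) ->
  exists k : int, isInt (p - k%:~R * p0) /\ isInt (q - k%:~R * q0).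
Proof.
have [_ _ _ _ hprim] := hE.
have [_ [[p0 [q0 [l0 [_ hl0 ->]]]] hy0]] :=
  hcyc AL_subgroup_plane_dual AL_isotropic_plane_dual.
exists p0, q0 => p q hw.
have [|k [l [hl e]]] := (hy0 (p *: e1 + q *: e2)).1.
  by exists p, q, 0; rewrite addr0; split=> //; exact: lattice_vec0.
(* k l0 + l is a lattice vector lying in E (x) Q, so its coordinates are integers. *)
exists k; apply: (hprim (k%:~R *: l0 + l)); first exact/lattice_vecD/hl/lattice_vecZ.
by apply/rowP => i; move/rowP/(_ i): e; rewrite !mxE; lra.
Qed.

Lemma plane_dual_linear_form : exists al be a b : int, a * be - b * al = 1 /\
  forall p q, dual_vec G (p *: e1 + q *: e2) -> isInt (p * be%:~R - q * al%:~R).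
Proof.
have [p0 [q0 hcoef]] := plane_dual_coef_cyclic.
have [al [be [a [b [hab hpar]]]]] := unimodular_pair p0 q0.
exists al, be, a, b; split=> // p q /hcoef [k [hp hq]].
have -> : p * be%:~R - q * al%:~R = (p - k%:~R * p0) * be%:~R
    - (q - k%:~R * q0) * al%:~R + k%:~R * (p0 * be%:~R - q0 * al%:~R) by ring.
by rewrite hpar subrr mulr0 addr0; apply: isIntB; apply/isIntM/isInt_int.
Qed.

Lemma plane_vec_dual_primitive :
  exists a b : int, dual_primitive G (a%:~R *: e1 + b%:~R *: e2).
Proof.
have [al [be [a [b [hab hform]]]]] := plane_dual_linear_form.
exists a, b => h h0; rewrite scalerDr !scalerA => /hform.
have -> : h%:~R^-1 * a%:~R * be%:~R - h%:~R^-1 * b%:~R * al%:~R = h%:~R^-1 :> rat.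
  by rewrite -!mulrA -mulrBr -!intrM -intrB hab mulr1.
exact: isInt_invr.
Qed.

End IsotropicPlane.

Theorem lemma5p1 (n : nat) (hn : (3 <= n)%N) (G0 : 'M[int]_(n - 2))
  (hev : even_gram G0) (hneg : neg_definite G0)
  (hcyc : isotropic_subgroups_cyclic (gram2U_plus G0)) :
  forall e1 e2 : 'rV[rat]_(4 + (n - 2)),
    prim_tot_isotropic_rank2 (gram2U_plus G0) e1 e2 ->
    closure_contains_standard_cusp (gram2U_plus G0) e1 e2.
Proof.
move=> e1 e2 hE; have hG := even_gram_2U_plus hev.
have [a [b hv]] := plane_vec_dual_primitive hG hE hcyc.
have [he1 he2 _ _ _] := hE.
have hlat : lattice_vec (a%:~R *: e1 + b%:~R *: e2).
  by apply: lattice_vecD; apply: lattice_vecZ.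
exists a, b; split.
- exact: primitive_of_dual_primitive hv.
- exact: plane_isotropic.
- exact: div_is1_of_dual_primitive hv.
Qed.
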